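(* Let $c>0$ be a constant and consider the space of variables $(\rho,v,p,e,dt,dx)$, where $dt,dx$ are treated as independent variables (differentials), with $|v|<c$. Put $S=\dfrac{e+p}{c^{2}-v^{2}}$. For a real parameter $\epsilon$ (for which all expressions below are defined, in particular $\epsilon p+1\neq 0$, $\epsilon(p+Sv^{2})+1\neq 0$, $(\epsilon p+1)^2>v^2/c^2$) define the transformation $T_\epsilon:(\rho,v,p,e,dt,dx)\mapsto(\rho^{*},v^{*},p^{*},e^{*},dt^{*},dx^{*})$ by \[ \rho^{*}=\frac{\rho\sqrt{(\epsilon p+1)^{2}-v^{2}/c^{2}}}{\left(\epsilon(p+Sv^{2})+1\right)\sqrt{1-v^{2}/c^{2}}},\qquad v^{*}=\frac{v}{\epsilon p+1},\qquad p^{*}=\frac{p}{\epsilon p+1}, \] \[ e^{*}=\frac{S\left(c^{2}(\epsilon p+1)^{2}-v^{2}\right)}{\left(\epsilon(p+Sv^{2})+1\right)(\epsilon p+1)}-\frac{p}{\epsilon p+1}, \] \[ dt^{*}=-\epsilon\left(Sv\,dx-(p+Sv^{2})\,dt\right)+dt,\qquad dx^{*}=dx . \] (This is the subclass, with $a_1=-\epsilon^{-1}$, $a_2=a_4=\epsilon^{-1}$, $a_3=1$, of reciprocal transformations leaving invariant the 1+1-dimensional relativistic gasdynamic system $\partial_t\big(\rho c/\sqrt{c^2-v^2}\big)+\partial_x\big(\rho c v/\sqrt{c^2-v^2}\big)=0$, $\partial_t\big((e+p)v/(c^2-v^2)\big)+\partial_x\big((e+p)v^2/(c^2-v^2)+p\big)=0$.)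 Then the family $\{T_\epsilon\}$ is a one-parameter Lie group of transformations ($T_{\epsilon_1}\circ T_{\epsilon_2}=T_{\epsilon_1+\epsilon_2}$ where defined, $T_0=\mathrm{id}$), and, writing $S^{*}=(e^{*}+p^{*})/(c^{2}-v^{*2})$, the transformed quantities satisfy the Cauchy problem \[ \frac{d\rho^{*}}{d\epsilon}=-\frac{\rho^{*}v^{*2}e^{*}}{c^{2}-v^{*2}},\quad \frac{dv^{*}}{d\epsilon}=-p^{*}v^{*},\quad \frac{dp^{*}}{d\epsilon}=-p^{*2},\quad \frac{de^{*}}{d\epsilon}=\frac{c^{2}p^{*2}-v^{*2}e^{*2}}{c^{2}-v^{*2}}, \] \[ \frac{d(dt^{*})}{d\epsilon}=(p^{*}+S^{*}v^{*2})\,dt^{*}-S^{*}v^{*}\,dx^{*},\qquad \frac{d(dx^{*})}{d\epsilon}=0, \] with initial data $\rho^{*}=\rho,\ v^{*}=v,\ p^{*}=p,\ e^{*}=e,\ dt^{*}=dt,\ dx^{*}=dx$ at $\epsilon=0$. Equivalently, the group has infinitesimal generator \[ X=-\frac{\rho v^{2}e}{c^{2}-v^{2}}\partial_{\rho}-pv\,\partial_{v}-p^{2}\partial_{p}+\frac{c^{2}p^{2}-e^{2}v^{2}}{c^{2}-v^{2}}\partial_{e}+\frac{(c^{2}p+ev^{2})\,dt-v(e+p)\,dx}{c^{2}-v^{2}}\,\partial_{dt}. \]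
   Context: $c$ denotes the speed of light; $\rho$ is density, $v$ velocity, $p$ pressure, $e$ energy density. The differentials $dt,dx$ are regarded as additional coordinates on which the transformations act. A one-parameter Lie group of transformations is a family $T_\epsilon$ with $T_0$ the identity and $T_{\epsilon_1}\circ T_{\epsilon_2}=T_{\epsilon_1+\epsilon_2}$; its infinitesimal generator is the vector field of $\epsilon$-derivatives at $\epsilon=0$. *)

From Stdlib Require Import Reals.
From Coquelicot Require Import Coquelicot.
Open Scope R_scope.

(* A point (rho, v, p, e, dt, dx) of the extended space; dt, dx are the
   differentials, treated as independent coordinates. *)
Record state := mkState {
  rho : R; vel : R; pr : R; en : R; dt : R; dx : R }.

Definition Sfun (c : R) (s : state) : R :=
  (en s + pr s) / (c ^ 2 - vel s ^ 2).

Definition Tdef (c eps : R) (s : state) : Prop :=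
  Rabs (vel s) < c /\
  eps * pr s + 1 <> 0 /\
  eps * (pr s + Sfun c s * vel s ^ 2) + 1 <> 0 /\
  (eps * pr s + 1) ^ 2 > vel s ^ 2 / c ^ 2.

Definition T (c eps : R) (s : state) : state :=
  let v := vel s in let p := pr s in let S := Sfun c s in
  let a := eps * p + 1 in
  let b := eps * (p + S * v ^ 2) + 1 in
  mkState
    (rho s * sqrt (a ^ 2 - v ^ 2 / c ^ 2) / (b * sqrt (1 - v ^ 2 / c ^ 2)))
    (v / a)
    (p / a)
    (S * (c ^ 2 * a ^ 2 - v ^ 2) / (b * a) - p / a)
    (- eps * (S * v * dx s - (p + S * v ^ 2) * dt s) + dt s)
    (dx s).

(** In terms of the momentum density [m = S v] and the momentum flux
    [q = p + S v^2] of the second conservation law, [T_eps] acts by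
    [p -> p / (1 + eps p)], [v -> v / (1 + eps p)], [m -> m / (1 + eps q)],
    [q -> q / (1 + eps q)] and [dt -> dt + eps (q dt - m dx)].  The Moebius
    maps [x -> x / (1 + eps x)] form the additive group in [eps], which gives
    the group law; the density factor composes because [sqrt (x^2 - v^2/c^2)]
    is homogeneous of degree one in [(x, v)]. *)

From Stdlib Require Import Reals Lra.
From Coquelicot Require Import Coquelicot.
Open Scope R_scope.

Definition momentum (c : R) (s : state) : R := Sfun c s * vel s.

Definition momentum_flux (c : R) (s : state) : R := pr s + Sfun c s * vel s ^ 2.

Lemma state_ext (s s' : state) :
  rho s = rho s' -> vel s = vel s' -> pr s = pr s' -> en s = en s' ->
  dt s = dt s' -> dx s = dx s' -> s = s'.
Proof. destruct s, s'; simpl; intros; subst; reflexivity. Qed.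

Lemma c2_minus_v2_pos (c v : R) : Rabs v < c -> 0 < c ^ 2 - v ^ 2.
Proof. intros hv. rewrite <- (pow2_abs v). pose proof (Rabs_pos v). nra. Qed.

Lemma one_minus_v2_div_c2_pos (c v : R) : Rabs v < c -> 0 < 1 - v ^ 2 / c ^ 2.
Proof.
  intros hv. pose proof (c2_minus_v2_pos c v hv). pose proof (Rabs_pos v).
  replace (1 - v ^ 2 / c ^ 2) with ((c ^ 2 - v ^ 2) / c ^ 2) by (field; lra).
  apply Rdiv_lt_0_compat; nra.
Qed.

Lemma Tdef_0 {c : R} {s : state} : Rabs (vel s) < c -> Tdef c 0 s.
Proof.
  intros hv. pose proof (one_minus_v2_div_c2_pos c (vel s) hv).
  unfold Tdef. rewrite !Rmult_0_l, !Rplus_0_l. repeat split; lra.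
Qed.

Lemma Tdef_lorentz_pos {c eps : R} {s : state} :
  Tdef c eps s -> 0 < (c * (eps * pr s + 1)) ^ 2 - vel s ^ 2.
Proof.
  intros [hv [_ [_ hav]]]. pose proof (Rabs_pos (vel s)).
  apply Rmult_gt_compat_r with (r := c ^ 2) in hav; [|nra].
  replace (vel s ^ 2 / c ^ 2 * c ^ 2) with (vel s ^ 2) in hav by (field; lra).
  rewrite Rpow_mult_distr. lra.
Qed.

Lemma rho_T (c eps : R) (s : state) :
  rho (T c eps s) =
  rho s * sqrt ((eps * pr s + 1) ^ 2 - vel s ^ 2 / c ^ 2)
  / ((eps * momentum_flux c s + 1) * sqrt (1 - vel s ^ 2 / c ^ 2)).
Proof. reflexivity. Qed.

Lemma vel_T (c eps : R) (s : state) : vel (T c eps s) = vel s / (eps * pr s + 1).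
Proof. reflexivity. Qed.

Lemma pr_T (c eps : R) (s : state) : pr (T c eps s) = pr s / (eps * pr s + 1).
Proof. reflexivity. Qed.

Lemma en_T (c eps : R) (s : state) :
  en (T c eps s) =
  Sfun c s * (c ^ 2 * (eps * pr s + 1) ^ 2 - vel s ^ 2)
  / ((eps * momentum_flux c s + 1) * (eps * pr s + 1)) - pr s / (eps * pr s + 1).
Proof. reflexivity. Qed.

Lemma dt_T (c eps : R) (s : state) :
  dt (T c eps s) = dt s + eps * (momentum_flux c s * dt s - momentum c s * dx s).
Proof. unfold T, momentum, momentum_flux; simpl; ring. Qed.

Lemma dx_T (c eps : R) (s : state) : dx (T c eps s) = dx s.
Proof. reflexivity. Qed.

Lemma Sfun_T {c eps : R} {s : state} : Tdef c eps s ->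
  Sfun c (T c eps s) = Sfun c s * (eps * pr s + 1) / (eps * momentum_flux c s + 1).
Proof.
  intros H. pose proof (Tdef_lorentz_pos H).
  destruct H as [hv [ha [hb _]]]. pose proof (c2_minus_v2_pos c (vel s) hv).
  unfold Sfun at 1. rewrite en_T, pr_T, vel_T.
  unfold momentum_flux in *. field. repeat split; lra.
Qed.

Lemma momentum_T {c eps : R} {s : state} : Tdef c eps s ->
  momentum c (T c eps s) = momentum c s / (eps * momentum_flux c s + 1).
Proof.
  intros H. unfold momentum at 1. rewrite (Sfun_T H), vel_T.
  destruct H as [_ [ha [hb _]]]. unfold momentum, momentum_flux in *.
  field. split; assumption.
Qed.

Lemma momentum_flux_T {c eps : R} {s : state} : Tdef c eps s ->
  momentum_flux c (T c eps s) = momentum_flux c s / (eps * momentum_flux c s + 1).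
Proof.
  intros H. unfold momentum_flux at 1. rewrite (Sfun_T H), pr_T, vel_T.
  destruct H as [_ [ha [hb _]]]. unfold momentum_flux in *.
  field. split; assumption.
Qed.

Lemma mobius_shift (e1 e2 x : R) : e2 * x + 1 <> 0 ->
  e1 * (x / (e2 * x + 1)) + 1 = ((e1 + e2) * x + 1) / (e2 * x + 1).
Proof. intros h. field. exact h. Qed.

Lemma sqrt_rescale (a x v c : R) : a <> 0 -> c <> 0 ->
  sqrt ((x / a) ^ 2 - (v / a) ^ 2 / c ^ 2) = sqrt (x ^ 2 - v ^ 2 / c ^ 2) / sqrt (a ^ 2).
Proof.
  intros ha hc. rewrite <- sqrt_div_alt by (apply pow2_gt_0; exact ha).
  f_equal. field. split; assumption.
Qed.

Lemma sqrt_one_rescale (a v c : R) : a <> 0 -> c <> 0 ->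
  sqrt (1 - (v / a) ^ 2 / c ^ 2) = sqrt (a ^ 2 - v ^ 2 / c ^ 2) / sqrt (a ^ 2).
Proof.
  intros ha hc. rewrite <- sqrt_rescale by assumption.
  f_equal. field. split; assumption.
Qed.

Lemma T_0 {c : R} {s : state} : Rabs (vel s) < c -> T c 0 s = s.
Proof.
  intros hv. pose proof (one_minus_v2_div_c2_pos c (vel s) hv).
  pose proof (c2_minus_v2_pos c (vel s) hv).
  assert (0 < sqrt (1 - vel s ^ 2 / c ^ 2)) by (apply sqrt_lt_R0; lra).
  apply state_ext.
  - rewrite rho_T.
    replace ((0 * pr s + 1) ^ 2 - vel s ^ 2 / c ^ 2) with (1 - vel s ^ 2 / c ^ 2) by ring.
    field. lra.
  - rewrite vel_T. field.
  - rewrite pr_T. field.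
  - rewrite en_T. unfold Sfun, momentum_flux. field. lra.
  - rewrite dt_T. ring.
  - reflexivity.
Qed.

Lemma shift_pr_T (c e1 e2 : R) (s : state) : e2 * pr s + 1 <> 0 ->
  e1 * pr (T c e2 s) + 1 = ((e1 + e2) * pr s + 1) / (e2 * pr s + 1).
Proof. intros h. rewrite pr_T. exact (mobius_shift e1 e2 (pr s) h). Qed.

Lemma shift_momentum_flux_T {c e2 : R} {s : state} (e1 : R) : Tdef c e2 s ->
  e1 * momentum_flux c (T c e2 s) + 1 =
  ((e1 + e2) * momentum_flux c s + 1) / (e2 * momentum_flux c s + 1).
Proof.
  intros H. rewrite (momentum_flux_T H).
  destruct H as [_ [_ [hb _]]]. exact (mobius_shift e1 e2 _ hb).
Qed.

Lemma T_comp {c e1 e2 : R} {s : state} :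
  Tdef c e2 s -> Tdef c (e1 + e2) s -> T c e1 (T c e2 s) = T c (e1 + e2) s.
Proof.
  intros H2 H.
  pose proof (shift_pr_T c e1 e2 s) as Ha. pose proof (shift_momentum_flux_T e1 H2) as Hb.
  pose proof H2 as [hv [ha [hb hav]]]. destruct H as [_ [hA [hB _]]].
  assert (hc : c <> 0) by (pose proof (Rabs_pos (vel s)); lra).
  unfold momentum_flux in hb, hB.
  apply state_ext.
  - rewrite !rho_T, Ha, Hb, vel_T by assumption.
    rewrite sqrt_rescale, sqrt_one_rescale by assumption.
    assert (0 < sqrt (1 - vel s ^ 2 / c ^ 2))
      by (apply sqrt_lt_R0, one_minus_v2_div_c2_pos; exact hv).
    assert (0 < sqrt ((e2 * pr s + 1) ^ 2 - vel s ^ 2 / c ^ 2)) by (apply sqrt_lt_R0; lra).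
    assert (0 < sqrt ((e2 * pr s + 1) ^ 2)) by (apply sqrt_lt_R0, pow2_gt_0; exact ha).
    unfold momentum_flux. field. repeat split; lra.
  - rewrite !vel_T, Ha by assumption. field. split; assumption.
  - rewrite pr_T, Ha, !pr_T by assumption. field. split; assumption.
  - rewrite !en_T, Ha, Hb, (Sfun_T H2), !pr_T, vel_T by assumption.
    unfold momentum_flux. field. repeat split; assumption.
  - rewrite !dt_T, (momentum_flux_T H2), (momentum_T H2), dx_T.
    unfold momentum_flux. field. exact hb.
  - reflexivity.
Qed.

Lemma is_derive_mobius (x y eps : R) : eps * x + 1 <> 0 ->
  is_derive (fun e => y / (e * x + 1)) eps
    (- (x / (eps * x + 1) * (y / (eps * x + 1)))).
Proof. intros h. auto_derive; [exact h|]. field. exact h. Qed.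

Lemma is_derive_sqrt_quad_div_affine (r p q k K eps l : R) :
  0 < (eps * p + 1) ^ 2 - k -> eps * q + 1 <> 0 -> K <> 0 ->
  l = r * sqrt ((eps * p + 1) ^ 2 - k) / ((eps * q + 1) * K)
      * ((eps * p + 1) * p / ((eps * p + 1) ^ 2 - k) - q / (eps * q + 1)) ->
  is_derive (fun e => r * sqrt ((e * p + 1) ^ 2 - k) / ((e * q + 1) * K)) eps l.
Proof.
  intros hX hb hK ->.
  auto_derive.
  - repeat split.
    + ring_simplify; ring_simplify in hX; lra.
    + apply Rmult_integral_contrapositive_currified; assumption.
  - replace ((eps * p + 1) * ((eps * p + 1) * 1) + - k) with ((eps * p + 1) ^ 2 - k) by ring.
    assert (0 < sqrt ((eps * p + 1) ^ 2 - k)) by (apply sqrt_lt_R0; exact hX).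
    pose proof (sqrt_sqrt ((eps * p + 1) ^ 2 - k) (Rlt_le _ _ hX)) as HX.
    set (Q := sqrt ((eps * p + 1) ^ 2 - k)) in *.
    rewrite <- HX.
    field. repeat split; lra.
Qed.

Lemma is_derive_rho_T {c eps : R} {s : state} : Tdef c eps s ->
  is_derive (fun e => rho (T c e s)) eps
    (- (rho (T c eps s) * vel (T c eps s) ^ 2 * en (T c eps s))
       / (c ^ 2 - vel (T c eps s) ^ 2)).
Proof.
  intros H. pose proof (Tdef_lorentz_pos H).
  destruct H as [hv [ha [hb hav]]].
  pose proof (c2_minus_v2_pos c (vel s) hv). pose proof (one_minus_v2_div_c2_pos c (vel s) hv).
  assert (0 < sqrt (1 - vel s ^ 2 / c ^ 2)) by (apply sqrt_lt_R0; lra).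
  assert (0 < sqrt ((eps * pr s + 1) ^ 2 - vel s ^ 2 / c ^ 2)) by (apply sqrt_lt_R0; lra).
  apply is_derive_sqrt_quad_div_affine; [lra | exact hb | lra |].
  pose proof (Rabs_pos (vel s)).
  rewrite rho_T, vel_T, en_T. unfold momentum_flux in *.
  field. repeat split; lra.
Qed.

Lemma is_derive_vel_T (c eps : R) (s : state) : eps * pr s + 1 <> 0 ->
  is_derive (fun e => vel (T c e s)) eps (- (pr (T c eps s) * vel (T c eps s))).
Proof. exact (is_derive_mobius (pr s) (vel s) eps). Qed.

Lemma is_derive_pr_T (c eps : R) (s : state) : eps * pr s + 1 <> 0 ->
  is_derive (fun e => pr (T c e s)) eps (- pr (T c eps s) ^ 2).
Proof.
  intros h. rewrite <- Rsqr_pow2. exact (is_derive_mobius (pr s) (pr s) eps h).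
Qed.

Lemma is_derive_en_T {c eps : R} {s : state} : Tdef c eps s ->
  is_derive (fun e => en (T c e s)) eps
    ((c ^ 2 * pr (T c eps s) ^ 2 - vel (T c eps s) ^ 2 * en (T c eps s) ^ 2)
     / (c ^ 2 - vel (T c eps s) ^ 2)).
Proof.
  intros H. pose proof (Tdef_lorentz_pos H).
  destruct H as [hv [ha [hb _]]]. pose proof (c2_minus_v2_pos c (vel s) hv).
  rewrite en_T, pr_T, vel_T. unfold T; cbv zeta; cbn [en].
  auto_derive; [repeat split; try apply Rmult_integral_contrapositive_currified; assumption|].
  unfold momentum_flux in *. field. repeat split; lra.
Qed.

Lemma is_derive_dt_T {c eps : R} {s : state} : Tdef c eps s ->
  is_derive (fun e => dt (T c e s)) eps
    (momentum_flux c (T c eps s) * dt (T c eps s) - momentum c (T c eps s) * dx (T c eps s)).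
Proof.
  intros H. rewrite (momentum_flux_T H), (momentum_T H), dt_T, dx_T.
  destruct H as [_ [_ [hb _]]].
  apply (is_derive_ext (fun e => dt s + e * (momentum_flux c s * dt s - momentum c s * dx s)));
    [intros e; symmetry; apply dt_T|].
  auto_derive; [exact I|]. unfold momentum_flux in *. field. exact hb.
Qed.

Lemma is_derive_dx_T (c eps : R) (s : state) :
  is_derive (fun e => dx (T c e s)) eps 0.
Proof. apply (is_derive_const (dx s)). Qed.

Theorem mainTheorem1 (c : R) (hc : 0 < c) :
  (* T_0 = id *)
  (forall s : state, Rabs (vel s) < c -> T c 0 s = s) /\
  (* group law, where defined *)
  (forall (e1 e2 : R) (s : state),
      Tdef c e2 s -> Tdef c e1 (T c e2 s) -> Tdef c (e1 + e2) s ->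
      T c e1 (T c e2 s) = T c (e1 + e2) s) /\
  (* the Cauchy problem (initial data given by T_0 = id above) *)
  (forall (s : state) (eps : R), Tdef c eps s ->
      let s' := T c eps s in
      let S' := (en s' + pr s') / (c ^ 2 - vel s' ^ 2) in
      is_derive (fun e => rho (T c e s)) eps
        (- (rho s' * vel s' ^ 2 * en s') / (c ^ 2 - vel s' ^ 2)) /\
      is_derive (fun e => vel (T c e s)) eps (- (pr s' * vel s')) /\
      is_derive (fun e => pr (T c e s)) eps (- (pr s' ^ 2)) /\
      is_derive (fun e => en (T c e s)) eps
        ((c ^ 2 * pr s' ^ 2 - vel s' ^ 2 * en s' ^ 2) / (c ^ 2 - vel s' ^ 2)) /\
      is_derive (fun e => dt (T c e s)) eps
        ((pr s' + S' * vel s' ^ 2) * dt s' - S' * vel s' * dx s') /\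
      is_derive (fun e => dx (T c e s)) eps 0) /\
  (* infinitesimal generator X *)
  (forall s : state, Rabs (vel s) < c ->
      is_derive (fun e => rho (T c e s)) 0
        (- (rho s * vel s ^ 2 * en s) / (c ^ 2 - vel s ^ 2)) /\
      is_derive (fun e => vel (T c e s)) 0 (- (pr s * vel s)) /\
      is_derive (fun e => pr (T c e s)) 0 (- (pr s ^ 2)) /\
      is_derive (fun e => en (T c e s)) 0
        ((c ^ 2 * pr s ^ 2 - en s ^ 2 * vel s ^ 2) / (c ^ 2 - vel s ^ 2)) /\
      is_derive (fun e => dt (T c e s)) 0
        (((c ^ 2 * pr s + en s * vel s ^ 2) * dt s - vel s * (en s + pr s) * dx s)
           / (c ^ 2 - vel s ^ 2)) /\
      is_derive (fun e => dx (T c e s)) 0 0).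
Proof.
  split; [exact (@T_0 c)|].
  split; [intros e1 e2 s H2 _ H; exact (T_comp H2 H)|].
  split.
  - intros s eps H; cbv zeta.
    pose proof H as [_ [ha _]].
    exact (conj (is_derive_rho_T H) (conj (is_derive_vel_T c eps s ha)
          (conj (is_derive_pr_T c eps s ha) (conj (is_derive_en_T H)
          (conj (is_derive_dt_T H) (is_derive_dx_T c eps s)))))).
  - intros s hv.
    pose proof (Tdef_0 hv) as H0. pose proof H0 as [_ [ha _]].
    pose proof (c2_minus_v2_pos c (vel s) hv).
    pose proof (is_derive_rho_T H0) as Hrho. pose proof (is_derive_vel_T c 0 s ha) as Hvel.
    pose proof (is_derive_pr_T c 0 s ha) as Hpr. pose proof (is_derive_en_T H0) as Hen.
    pose proof (is_derive_dt_T H0) as Hdt.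
    rewrite (T_0 hv) in Hrho, Hvel, Hpr, Hen, Hdt.
    refine (conj Hrho (conj Hvel (conj Hpr (conj _ (conj _ (is_derive_dx_T c 0 s)))))).
    + rewrite (Rmult_comm (en s ^ 2)). exact Hen.
    + replace (((c ^ 2 * pr s + en s * vel s ^ 2) * dt s - vel s * (en s + pr s) * dx s)
               / (c ^ 2 - vel s ^ 2))
        with (momentum_flux c s * dt s - momentum c s * dx s)
        by (unfold momentum_flux, momentum, Sfun; field; lra).
      exact Hdt.
Qed.
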